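(* Let $m\ge3$, let $O^m$ be the set of odd-parity $m$-bit strings and let $u=u_1\cdots u_m\in O^m$. Let $n\ge1$ and let $m$ parties (the first being Alice) hold $X_j=(x^j_1,\dots,x^j_n)\in\{0,1\}^n$, $j=1,\dots,m$, under the promise that $x_i^1\cdots x_i^m\in A$ for every $i$, where $A$ is any subset of $\{v\in O^m: v=u \text{ or the Hamming weight of } v\oplus u \text{ is an odd multiple of } 2\}$. Let $f_u(X_1,\dots,X_m)=\bigoplus_{i=1}^n t_u(x_i^1\cdots x_i^m)$ with $t_u(w)=1$ if $w=u$ and $0$ otherwise. Suppose the parties share $n$ copies of the GHZ state $|\psi_m^{GHZ}\rangle=(|0^m\rangle+|1^m\rangle)/\sqrt2$, the $j$-th qubit of each copy held by party $j$. Then there is a protocol in which, for each $i$, party $j$ applies to its qubit of the $i$-th copy the operator $H$ if $x_i^j=u_j$ and the operator $HR$ (first $R$, then $H$) if $x_i^j\ne u_j$, measures in the computational basis, performs local classical computation, and parties $2,\dots,m$ each send one classical bit to Alice ($m-1$ classical bits in total), after which Alice outputs $f_u(X_1,\dots,X_m)$ correctly for every input satisfying the promise.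
   Context: $H$ is the Hadamard gate $H|0\rangle=(|0\rangle+|1\rangle)/\sqrt2$, $H|1\rangle=(|0\rangle-|1\rangle)/\sqrt2$, and $R$ is the phase gate $R|0\rangle=|0\rangle$, $R|1\rangle=e^{i\pi/2}|1\rangle$. Communication consists only of classical bits sent to Alice; no quantum communication is allowed. *)

From mathcomp Require Import all_boot all_order all_algebra algC.
Set Implicit Arguments. Unset Strict Implicit. Unset Printing Implicit Defensive.
Import Order.TTheory GRing.Theory Num.Theory.
Local Open Scope ring_scope.

Definition ob (b : bool) : 'I_2 := if b then ord_max else ord0.

Definition Hgate : 'M[algC]_2 :=
  \matrix_(r < 2, c < 2) ((if (val r == 1%N) && (val c == 1%N) then -1 else 1) / sqrtC 2).

Definition Rgate : 'M[algC]_2 :=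
  \matrix_(r < 2, c < 2) (if r == c then (if val r == 1%N then 'i else 1) else 0).

Definition HRgate : 'M[algC]_2 := Hgate *m Rgate.

Definition hdist m (v u : {ffun 'I_m -> bool}) : nat := #|[set j | v j != u j]|.

Definition odd_parity m (v : {ffun 'I_m -> bool}) : bool := odd #|[set j | v j]|.

Definition odd_mult2 (w : nat) : bool := ((2 %| w)%N && odd (w %/ 2)%N).

Definition admissible m (u : {ffun 'I_m -> bool}) : {set {ffun 'I_m -> bool}} :=
  [set v | odd_parity v && ((v == u) || odd_mult2 (hdist v u))].

Definition column m n (X : 'I_m -> 'I_n -> bool) (i : 'I_n) : {ffun 'I_m -> bool} :=
  [ffun j => X j i].

Definition f_u m n (u : {ffun 'I_m -> bool}) (X : 'I_m -> 'I_n -> bool) : bool :=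
  \big[addb/false]_(i < n) (column X i == u).

Definition local_op m n (u : {ffun 'I_m -> bool}) (X : 'I_m -> 'I_n -> bool)
  (j : 'I_m) (i : 'I_n) : 'M[algC]_2 :=
  if X j i == u j then Hgate else HRgate.

(* Amplitude of the joint computational-basis outcome a (a j i = outcome of
   party j on copy i) of the state (tensor_i (tensor_j U_{ij})) |GHZ_m>^{n},
   |GHZ_m> = (|0^m> + |1^m>)/sqrt2. *)
Definition amplitude m n (u : {ffun 'I_m -> bool}) (X : 'I_m -> 'I_n -> bool)
  (a : 'I_m -> 'I_n -> bool) : algC :=
  \prod_(i < n)
    ((\prod_(j < m) local_op u X j i (ob (a j i)) (ob false)
      + \prod_(j < m) local_op u X j i (ob (a j i)) (ob true)) / sqrtC 2).

From mathcomp Require Import all_boot all_order all_algebra algC.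
From mathcomp Require Import ring.
Set Implicit Arguments. Unset Strict Implicit. Unset Printing Implicit Defensive.
Import Order.TTheory GRing.Theory Num.Theory.
Local Open Scope ring_scope.

(* On the i-th GHZ copy, an outcome string a has amplitude proportional to
   1 + (-1)^(a_1 + ... + a_m) * 'i^d, where d is the Hamming distance of the
   i-th input column from u: H contributes the sign, R contributes a factor 'i
   on every coordinate that differs from u.  The promise makes 'i^d equal to 1
   when the column is u and to -1 otherwise, so every outcome of nonzero
   probability has a_1 + ... + a_m even exactly when t_u of the column is 1.
   Hence f_u is n plus the parity of all outcomes, which Alice recovers from
   the parities sent by the other parties. *)

Definition parity (I : finType) (b : I -> bool) : bool := \big[addb/false]_(i : I) b i.

Lemma parity_negb (I : finType) (b : I -> bool) :
  parity (fun i => ~~ b i) = odd #|I| (+) parity b.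
Proof.
have parity_true : parity (fun _ : I => true) = odd #|I|.
  by rewrite /parity big_const; elim: #|I| => //= k ->.
rewrite -parity_true /parity -big_split /=.
by apply: eq_bigr => i _; case: (b i).
Qed.

Lemma prodr_sign (R : pzRingType) (I : finType) (b : I -> bool) :
  \prod_(i : I) (-1) ^+ b i = (-1) ^+ parity b :> R.
Proof. by rewrite (big_morph _ (@signr_addb R) (expr0 (-1) : (-1) ^+ false = 1)). Qed.

Lemma prodr_expb (R : pzSemiRingType) (I : finType) (P : pred I) (x : R) :
  \prod_(i : I) x ^+ P i = x ^+ #|[set i | P i]|.
Proof.
rewrite cardsE -prodr_const [RHS]big_mkcond /=.
by apply: eq_bigr => i _; rewrite unfold_in; case: (P i).
Qed.

Lemma add1r_sign_eq0 (R : numDomainType) (b : bool) : (1 + (-1) ^+ b == 0 :> R) = b.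
Proof. by case: b; rewrite ?expr1 ?subrr ?eqxx // -[1 + 1]/(2%:R) pnatr_eq0. Qed.

Lemma Hgate_obE b c : Hgate (ob b) (ob c) = (-1) ^+ (b && c) / sqrtC 2.
Proof. by rewrite mxE; case: b c => [] []. Qed.

Lemma Rgate_obE b c : Rgate (ob b) (ob c) = (b == c)%:R * 'i ^+ b.
Proof. by rewrite mxE; case: b c => [] [] /=; rewrite ?mul1r ?mul0r. Qed.

Lemma HRgate_obE b c : HRgate (ob b) (ob c) = (-1) ^+ (b && c) * 'i ^+ c / sqrtC 2.
Proof.
rewrite mxE !big_ord_recl big_ord0 /=.
have -> : lift ord0 ord0 = ob true by exact: val_inj.
rewrite -[ord0]/(ob false) !Hgate_obE !Rgate_obE.
by case: b c => [] [] /=; ring.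
Qed.

Lemma hdist_eq0 m (v u : {ffun 'I_m -> bool}) : (hdist v u == 0%N) = (v == u).
Proof.
rewrite /hdist cards_eq0; apply/eqP/eqP => [/setP v_u | ->].
  by apply/ffunP => j; move: (v_u j); rewrite !inE => /negbFE/eqP.
by apply/setP => j; rewrite !inE eqxx.
Qed.

Lemma admissible_iexp_hdist m (u v : {ffun 'I_m -> bool}) :
  v \in admissible u -> 'i ^+ hdist v u = (-1) ^+ (v != u) :> algC.
Proof.
rewrite inE => /andP [_ /orP [/eqP -> | /andP [even_d odd_half]]].
  by move: (eqxx u); rewrite -hdist_eq0 => /eqP ->; rewrite eqxx.
have -> : v != u by rewrite -hdist_eq0; apply: contraTneq odd_half => ->.
by rewrite -(divnK even_d) mulnC exprM sqrCi -[LHS]signr_odd odd_half.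
Qed.

Section CopyAmplitude.

Variables (m n : nat) (u : {ffun 'I_m -> bool}) (X : 'I_m -> 'I_n -> bool).

Lemma local_opE j i b c :
  local_op u X j i (ob b) (ob c) =
  (-1) ^+ (b && c) * 'i ^+ (c && (X j i != u j)) / sqrtC 2.
Proof.
rewrite /local_op; case: eqP => _ /=.
  by rewrite Hgate_obE andbF expr0 mulr1.
by rewrite HRgate_obE andbT.
Qed.

Definition copy_amplitude (a : 'I_m -> 'I_n -> bool) (i : 'I_n) : algC :=
  (\prod_(j < m) local_op u X j i (ob (a j i)) (ob false)
    + \prod_(j < m) local_op u X j i (ob (a j i)) (ob true)) / sqrtC 2.

Lemma copy_amplitudeE a i :
  copy_amplitude a i =
  (sqrtC 2)^-1 ^+ m.+1 * (1 + (-1) ^+ parity (a^~ i) * 'i ^+ hdist (column X i) u).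
Proof.
rewrite /copy_amplitude.
under eq_bigr do rewrite local_opE andbF /= expr0 mul1r mul1r.
under [Y in _ + Y]eq_bigr do rewrite local_opE andbT /=.
rewrite prodr_const card_ord !big_split /= prodr_sign prodr_expb prodr_const card_ord.
have -> : #|[set j | X j i != u j]| = hdist (column X i) u.
  by apply: eq_card => j; rewrite !inE ffunE.
by rewrite exprS; ring.
Qed.

Lemma copy_amplitude_neq0_parity a i :
  column X i \in admissible u -> copy_amplitude a i != 0 ->
  (column X i == u) = ~~ parity (a^~ i).
Proof.
move=> adm; rewrite copy_amplitudeE admissible_iexp_hdist // -signr_addb.
rewrite mulf_eq0 negb_or add1r_sign_eq0 => /andP [_].
by case: (column X i == u); case: (parity _).
Qed.

End CopyAmplitude.

Theorem theorem5 (m n : nat) (hm : (3 <= m)%N) (hn : (1 <= n)%N)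
  (u : {ffun 'I_m -> bool}) (hu : odd_parity u)
  (A : {set {ffun 'I_m -> bool}}) (hA : A \subset admissible u) :
  exists (msg : 'I_m -> ('I_n -> bool) -> ('I_n -> bool) -> bool)
         (out : ('I_n -> bool) -> ('I_n -> bool) -> ('I_m -> bool) -> bool),
    forall (X : 'I_m -> 'I_n -> bool),
      (forall i : 'I_n, column X i \in A) ->
      forall (a : 'I_m -> 'I_n -> bool),
        amplitude u X a != 0 ->
        forall alice : 'I_m, val alice = 0%N ->
          out (X alice) (a alice)
              (fun j => if val j == 0%N then false else msg j (X j) (a j))
          = f_u u X.
Proof.
exists (fun _ _ outcomes => parity outcomes).
(* Alice's own slot is received as [false]; she uses her own parity there. *)
exists (fun _ outcomes msgs =>
  odd n (+) \big[addb/false]_(j < m) (if val j == 0%N then parity outcomes else msgs j)).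
move=> X promise a amp_neq0 alice alice0 /=.
have column_parity i : (column X i == u) = ~~ parity (a^~ i).
  apply: copy_amplitude_neq0_parity; first exact: subsetP hA _ (promise i).
  by apply: contra amp_neq0 => amp_i_eq0; apply/prodf_eq0; exists i.
have -> : f_u u X = parity (fun i => ~~ parity (a^~ i)) by apply: eq_bigr.
rewrite parity_negb card_ord /parity exchange_big /=; congr (_ (+) _).
apply: eq_bigr => j _; case: eqP => // j0.
by have -> : alice = j by apply: val_inj; rewrite /= j0 alice0.
Qed.
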